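(* Let $q\ge 2$ be a prime power and $m\ge1$ an integer, and let $H_m=\sum_{k=1}^m \frac1k$ be the $m$-th harmonic number. Then $$\prod_{\deg p\le m}\left(1+\frac{1}{|p|}\right)<\exp(H_m),$$ where the product runs over all monic irreducible polynomials $p\in\mathbb{F}_q[x]$ of degree at most $m$.
   Context: For $f\in\mathbb{F}_q[x]$, $|f|=q^{\deg f}$. *)

From mathcomp Require Import all_boot all_order all_algebra all_field.
From mathcomp Require Import all_classical all_reals all_analysis.
Set Implicit Arguments. Unset Strict Implicit. Unset Printing Implicit Defensive.
Import Order.TTheory GRing.Theory Num.Theory.
Local Open Scope classical_set_scope.
Local Open Scope ring_scope.

Definition monic_irr_deg_le (F : finFieldType) (m : nat) : set {poly F} :=
  [set p | p \is monic /\ irreducible_poly p /\ ((size p).-1 <= m)%N].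

Definition pnorm (R : realType) (F : finFieldType) (p : {poly F}) : R :=
  (#|F|%:R) ^+ (size p).-1.

Definition harmonic_number (R : realType) (m : nat) : R :=
  \sum_(1 <= k < m.+1) (k%:R)^-1.

From mathcomp Require Import all_boot all_order all_algebra all_field.
From mathcomp Require Import all_classical all_reals all_analysis.
Set Implicit Arguments. Unset Strict Implicit. Unset Printing Implicit Defensive.
Import Order.TTheory GRing.Theory Num.Theory Pdiv.Field.
Local Open Scope classical_set_scope.
Local Open Scope ring_scope.

(* A monic irreducible [p] of degree [d] divides [X^(q^d) - X], and distinct ones are
   coprime, so the [N_d] of them multiply to a divisor of that polynomial: [d N_d <= q^d].
   Hence [sum_(deg p <= m) 1/|p| <= sum_(d <= m) N_d / q^d <= H_m], and the product is
   bounded by [prod exp(1/|p|) = exp(sum 1/|p|)], strictly since [1 + x < exp x] for the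
   factor [p = X]. *)

Definition monic_irreducibleb (F : finFieldType) (p : {poly F}) :=
  (p \is monic) && irreducibleb p.

Lemma monic_irreducible_dvdp_XqnX (F : finFieldType) (h : {poly F}) :
  h \is monic -> irreducible_poly h -> h %| 'X^(#|F| ^ (size h).-1) - 'X.
Proof.
move=> hM hI.
have hMI : monic_irreducible_poly h by split.
pose K := {poly %/ h with hMI}.
have XK : (in_qpoly h 'X : K) ^+ #|K| = in_qpoly h 'X by apply: expf_card.
rewrite card_qfpoly in XK.
have : in_qpoly h ('X^(#|F| ^ (size h).-1) - 'X) = 0.
  by rewrite rmorphB rmorphXn /= XK subrr.
by move=> /val_eqP /=; rewrite -Pdiv.IdomainMonic.modpE ?mk_monicE.
Qed.

Lemma coprimep_monic_irreducible (F : fieldType) (p q : {poly F}) :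
  p \is monic -> irreducible_poly p -> q \is monic -> irreducible_poly q ->
  p != q -> coprimep p q.
Proof.
move=> pM pI qM qI neq_pq.
rewrite irreducible_poly_coprime //; apply/negP => /(snd qI p).
have := fst pI; case: (size p) => [|[|n]] // _ /(_ isT).
by rewrite eqp_monic // (negPf neq_pq).
Qed.

Lemma prod_monic_irreducible_dvdp (F : fieldType) (s : seq {poly F}) (g : {poly F}) :
  uniq s -> {in s, forall p, [/\ p \is monic, irreducible_poly p & p %| g]} ->
  \prod_(p <- s) p %| g.
Proof.
elim: s => [|p s IH] /=; first by rewrite big_nil dvd1p.
move=> /andP[p_notin_s s_uniq] s_ok; rewrite big_cons.
have [pM pI p_dvd] := s_ok p (mem_head _ _).
have {}s_ok : {in s, forall r, [/\ r \is monic, irreducible_poly r & r %| g]}.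
  by move=> r r_in; apply: s_ok; rewrite inE r_in orbT.
rewrite Gauss_dvdp ?p_dvd ?IH // big_seq.
apply: (big_ind (coprimep p)); first exact: coprimep1.
  by move=> x y; rewrite coprimepMr => -> ->.
move=> r r_in; have [rM rI _] := s_ok r r_in.
by apply: coprimep_monic_irreducible => //; apply: contraNneq p_notin_s => ->.
Qed.

Lemma card_monic_irreducible_deg (F : finFieldType) (n k : nat) : (0 < k)%N ->
  (k * #|[pred x : {poly_n F} | monic_irreducibleb (val x) && ((size (val x)).-1 == k)]|
    <= #|F| ^ k)%N.
Proof.
move=> k_gt0; set P := [pred x : {poly_n F} | _].
pose s := [seq val x | x <- enum P].
have s_uniq : uniq s by rewrite map_inj_uniq ?enum_uniq //; apply: val_inj.
have size_s : size s = #|P| by rewrite size_map -cardE.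
have s_deg p : p \in s -> monic_irreducibleb p && ((size p).-1 == k).
  by case/mapP=> x; rewrite mem_enum => + ->.
pose g : {poly F} := 'X^(#|F| ^ k) - 'X.
have qk_gt1 : (1 < #|F| ^ k)%N.
  by rewrite -(expn0 #|F|) ltn_exp2l ?card_finNzRing_gt1.
have size_g : size g = (#|F| ^ k).+1.
  by rewrite size_polyDl size_polyXn // size_polyN size_polyX ltnS.
have g_neq0 : g != 0 by rewrite -size_poly_eq0 size_g.
have s_size p : p \in s -> size p = k.+1.
  case/s_deg/andP=> /andP[_ /irreducibleP [p_gt1 _]] /eqP <-.
  by rewrite prednK // ltnW.
have s_dvd : {in s, forall p, [/\ p \is monic, irreducible_poly p & p %| g]}.
  move=> p /s_deg /andP[/andP[pM /irreducibleP pI] /eqP p_deg].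
  by split=> //; rewrite /g -p_deg monic_irreducible_dvdp_XqnX.
have := dvdp_leq g_neq0 (prod_monic_irreducible_dvdp s_uniq s_dvd).
rewrite size_prod_seq => [|p /s_size]; last by rewrite -size_poly_eq0 => ->.
rewrite big_seq (eq_bigr (fun=> k.+1)) // -big_seq big_const_seq count_predT.
by rewrite iter_addn_0 size_g -size_s mulSn -addnS addKn ltnS.
Qed.

Lemma fsbig_monic_irr_deg_le (R : comPzSemiRingType) (F : finFieldType) (m : nat)
    (f : {poly F} -> R) :
  \big[*%R/1]_(p \in @monic_irr_deg_le F m) f p =
  \prod_(x : {poly_(m.+1) F} | monic_irreducibleb (val x)) f (val x).
Proof.
pose Q := [pred x : {poly_(m.+1) F} | monic_irreducibleb (val x)].
pose r := [seq val x | x <- enum Q].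
have r_uniq : uniq r by rewrite map_inj_uniq ?enum_uniq //; apply: val_inj.
have mem_r p : (p \in r) = (p \in monic_irr_deg_le m).
  apply/idP/idP.
    case/mapP=> x; rewrite mem_enum => /andP[xM /irreducibleP xI] ->; apply/mem_set.
    by split=> //; split=> //; rewrite -subn1 leq_subLR add1n size_npoly.
  move=> /set_mem [pM [pI p_deg]].
  have p_size : (size p <= m.+1)%N by rewrite (leq_trans (leqSpred _)).
  apply/mapP; exists (NPoly p_size) => //.
  by rewrite mem_enum inE /monic_irreducibleb /= pM; apply/irreducibleP.
rewrite (fsbigE r) //; last 2 first.
- by move=> p /=; rewrite mem_r => /set_mem.
- by move=> p /mem_set; rewrite -mem_r => ->.
rewrite big_seq_cond (eq_bigl (fun p => p \in r)) => [|p]; last by rewrite -mem_r andbb.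
by rewrite -big_seq big_map big_enum.
Qed.

Lemma prodr_1D_lt_expR_sum (R : realType) (I : finType) (P : pred I) (a : I -> R) (i0 : I) :
  P i0 -> 0 < a i0 -> (forall i, P i -> 0 <= a i) ->
  \prod_(i | P i) (1 + a i) < expR (\sum_(i | P i) a i).
Proof.
move=> P_i0 a_i0_gt0 a_ge0.
rewrite expR_sum (bigD1 i0) // [X in _ < X](bigD1 i0) //=.
set P1 := \prod_(i | _) _; set P2 := \prod_(i | _) _.
have P1_le_P2 : P1 <= P2.
  apply: ler_prod => i /andP[P_i _].
  by rewrite expR_ge1Dx andbT addr_ge0 ?a_ge0.
have P2_gt0 : 0 < P2 by apply: prodr_gt0 => i _; apply: expR_gt0.
apply: (le_lt_trans (y := (1 + a i0) * P2)).
  by rewrite ler_pM2l ?addr_gt0.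
by rewrite ltr_pM2r // expR_gt1Dx ?gt_eqF.
Qed.

Lemma sum_inv_pnorm_monic_irreducible_deg (R : realType) (F : finFieldType) (n j : nat) :
  \sum_(x : {poly_n F} | monic_irreducibleb (val x) && ((size (val x)).-1 == j))
    (pnorm R (val x))^-1 <= j%:R^-1.
Proof.
have [-> | j_gt0] := posnP j.
  rewrite big_pred0 ?invr0 // => x; apply/negbTE/negP.
  by case/andP=> /andP[_ /irreducibleP [x_gt1 _]]; rewrite -subn1 subn_eq0 leqNgt x_gt1.
have q_gt0 : (0 : R) < #|F|%:R by rewrite ltr0n ltnW ?card_finNzRing_gt1.
rewrite (eq_bigr (fun=> (#|F|%:R ^+ j)^-1)) => [|x /andP[_ /eqP <-] //].
rewrite sumr_const -[_ *+ _]mulr_natr mulrC ler_pdivrMr ?exprn_gt0 //.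
rewrite mulrC ler_pdivlMr ?ltr0n //.
by rewrite -natrX -natrM ler_nat mulnC card_monic_irreducible_deg.
Qed.

Lemma sum_inv_pnorm_le_harmonic_number (R : realType) (F : finFieldType) (m : nat) :
  \sum_(x : {poly_(m.+1) F} | monic_irreducibleb (val x)) (pnorm R (val x))^-1
    <= harmonic_number R m.
Proof.
have -> : harmonic_number R m = \sum_(j < m.+1) (j%:R)^-1.
  by rewrite /harmonic_number -(big_mkord xpredT (fun j => (j%:R : R)^-1))
    (big_ltn (ltn0Sn m)) /= invr0 add0r.
pose deg (x : {poly_(m.+1) F}) : 'I_m.+1 := inord (size (val x)).-1.
have degE x : deg x = (size (val x)).-1 :> nat.
  by rewrite inordK // ltnS -subn1 leq_subLR add1n size_npoly.
rewrite (partition_big deg xpredT) //=; apply: ler_sum => j _.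
rewrite (eq_bigl (fun x => monic_irreducibleb (val x) && ((size (val x)).-1 == j))).
  exact: sum_inv_pnorm_monic_irreducible_deg.
by move=> x; rewrite -degE.
Qed.

Theorem lemma2 (R : realType) (F : finFieldType) (m : nat) (hm : (1 <= m)%N) :
  \big[*%R/1]_(p \in @monic_irr_deg_le F m) (1 + (@pnorm R F p)^-1)
    < expR (@harmonic_number R m).
Proof.
rewrite fsbig_monic_irr_deg_le.
have X_size : (size ('X : {poly F}) <= m.+1)%N by rewrite size_polyX.
have X_mi : monic_irreducibleb (val (NPoly X_size)).
  rewrite /monic_irreducibleb monicX; apply/irreducibleP.
  by have := irredp_XsubC (0 : F); rewrite subr0.
have q_gt0 : (0 : R) < #|F|%:R by rewrite ltr0n ltnW ?card_finNzRing_gt1.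
have inv_pnorm_gt0 (p : {poly F}) : 0 < (pnorm R p)^-1 by rewrite invr_gt0 exprn_gt0.
pose a (x : {poly_(m.+1) F}) := (pnorm R (val x))^-1.
apply: (lt_le_trans (@prodr_1D_lt_expR_sum _ _ _ a _ X_mi _ _)).
- exact: inv_pnorm_gt0.
- move=> x _; exact: ltW (inv_pnorm_gt0 _).
- rewrite ler_expR; exact: (sum_inv_pnorm_le_harmonic_number R F m).
Qed.
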